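(* Let $T=\begin{pmatrix} A_1 & \cdots & A_N\\ B_1&\cdots&B_N\end{pmatrix}$ be a complex matrix partitioned into $2\times N$ blocks, let $p>0$, and suppose that the norm compression $\mathcal C_p(T)$ has rank at most $1$. Then $\|T\|_p\le\|\mathcal C_p(T)\|_p$ if $p\ge 2$, and $\|T\|_p\ge\|\mathcal C_p(T)\|_p$ if $0<p\le 2$.
   Context: For a matrix $X$ and $r>0$, $\|X\|_r=(\operatorname{Tr}|X|^r)^{1/r}$ with $|X|=(X^*X)^{1/2}$ (a norm for $r\ge1$, a quasi-norm for $0<r<1$). In a $2\times N$ partitioned block matrix all blocks in a block row have the same number of rows and all blocks in a block column have the same number of columns. The norm compression is the $2\times N$ real matrix $\mathcal C_p(T)=\begin{pmatrix} \|A_1\|_p & \cdots & \|A_N\|_p\\ \|B_1\|_p&\cdots&\|B_N\|_p\end{pmatrix}$. *)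

From mathcomp Require Import all_boot all_order all_algebra.
From mathcomp Require Import all_classical all_reals all_analysis.
From mathcomp.real_closed Require Import complex.
Set Implicit Arguments. Unset Strict Implicit. Unset Printing Implicit Defensive.
Import Order.TTheory GRing.Theory Num.Theory.
Local Open Scope ring_scope.

Definition adjmx (R : realType) (m n : nat) (X : 'M[R[i]]_(m, n)) : 'M[R[i]]_(n, m) :=
  map_mx Num.conj (trmx X).

(* Tr |X|^r: |X| = (X^* X)^{1/2}, whose eigenvalues are the square roots of the
   eigenvalues lambda_k >= 0 of the (positive semidefinite) Hermitian matrix X^* X;
   these eigenvalues (with multiplicity) are given by the library's spectral
   decomposition spectral_diag. *)
Definition schatten_tr (R : realType) (m n : nat) (X : 'M[R[i]]_(m, n)) (r : R) : R :=
  \sum_(k < n) (complex.Re (spectral_diag (adjmx X *m X) 0 k)) `^ (r / 2).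

Definition schatten (R : realType) (m n : nat) (X : 'M[R[i]]_(m, n)) (r : R) : R :=
  schatten_tr X r `^ r^-1.

Definition block2N (R : realType) (N m1 m2 : nat) (n : 'I_N -> nat)
    (A : forall j : 'I_N, 'M[R[i]]_(m1, n j)) (B : forall j : 'I_N, 'M[R[i]]_(m2, n j))
  : 'M[R[i]]_(m1 + m2, \sum_(j < N) n j) :=
  col_mx (\mxrow_(j < N) A j) (\mxrow_(j < N) B j).

Definition norm_compression (R : realType) (N m1 m2 : nat) (n : 'I_N -> nat)
    (A : forall j : 'I_N, 'M[R[i]]_(m1, n j)) (B : forall j : 'I_N, 'M[R[i]]_(m2, n j))
    (p : R) : 'M[R]_(2, N) :=
  \matrix_(i < 2, j < N) (if i == ord0 then schatten (A j) p else schatten (B j) p).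

Definition mxRtoC (R : realType) (m n : nat) (M : 'M[R]_(m, n)) : 'M[R[i]]_(m, n) :=
  map_mx (real_complex R) M.

From mathcomp Require Import all_boot all_order all_algebra.
From mathcomp Require Import all_classical all_reals all_analysis.
From mathcomp.real_closed Require Import complex.
From mathcomp Require Import ring lra.
Set Implicit Arguments. Unset Strict Implicit. Unset Printing Implicit Defensive.
Import Order.TTheory GRing.Theory Num.Theory.
Local Open Scope ring_scope.
Local Open Scope sesquilinear_scope.

(* Write q = p / 2.  Then ||X||_p ^ 2 = ||X^* X||_q, where ||M||_q is the l^q
   (quasi-)norm of the eigenvalues of the positive semidefinite matrix M, and
   X^* X and X X^* have the same nonzero eigenvalues.  If M = F_1 + ... + F_m with
   all F_j positive semidefinite, then conjugating by a unitary that diagonalises M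
   writes each eigenvalue of M as a sum over j of doubly stochastic averages of the
   eigenvalues of F_j; Jensen's inequality for t ^ q and the scalar Minkowski
   inequality then make ||.||_q subadditive on such sums when q >= 1 and
   superadditive when q <= 1.  Applied to T T^* = sum_j C_j C_j^* with
   C_j = [A_j; B_j], and then to C_j^* C_j = A_j^* A_j + B_j^* B_j, this compares
   ||T||_p ^ 2 with sum_j (||A_j||_p ^ 2 + ||B_j||_p ^ 2).  The latter is the squared
   Frobenius norm of C_p(T), which equals ||C_p(T)||_p ^ 2 because a matrix of rank
   at most one has a single nonzero singular value. *)

Section PowerSums.
Variable R : realType.
Implicit Types (r t u : R).

Definition qnorm (q : R) n (x : 'I_n -> R) := (\sum_k x k `^ q) `^ q^-1.

Lemma qnorm_ge0 q n (x : 'I_n -> R) : 0 <= qnorm q x.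
Proof. exact: powR_ge0. Qed.

Lemma qnormK q n (x : 'I_n -> R) : q != 0 -> qnorm q x `^ q = \sum_k x k `^ q.
Proof.
move=> q0; rewrite -powRrM mulVf // powRr1 //.
by apply: sumr_ge0 => k _; exact: powR_ge0.
Qed.

Lemma qnorm_eq0 q n (x : 'I_n -> R) :
  (forall k, 0 <= x k) -> qnorm q x = 0 -> forall k, x k = 0.
Proof.
move=> x0 /powR_eq0_eq0 sum0 k; apply: (@powR_eq0_eq0 _ _ q).
by move/psumr_eq0P: sum0 => ->// i _; exact: powR_ge0.
Qed.

Lemma sum_powR_single_support (q : R) n (x : 'I_n -> R) : q != 0 ->
  (forall k l, x k != 0 -> x l != 0 -> k = l) -> \sum_k x k `^ q = (\sum_k x k) `^ q.
Proof.
move=> q0 x_single; have [k0 xk0|x0] := pickP (fun k => x k != 0); last first.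
  have xk k : x k = 0 by apply/eqP/negbFE/x0.
  by rewrite !big1 => [|k _|k _]; rewrite ?xk ?powR0.
have xl l : l != k0 -> x l = 0.
  by move=> lk0; apply/eqP; apply: contraNT lk0 => /x_single/(_ xk0) ->.
rewrite (bigD1 k0) // [in RHS](bigD1 k0) //= !big1 => [|l /xl->|l /xl->];
  by rewrite ?addr0 ?powR0.
Qed.

Lemma qnorm_single_support (q : R) n (x : 'I_n -> R) : q != 0 -> (forall k, 0 <= x k) ->
  (forall k l, x k != 0 -> x l != 0 -> k = l) -> qnorm q x = \sum_k x k.
Proof.
move=> q0 x0 x_single; rewrite /qnorm sum_powR_single_support // -powRrM mulfV //.
by rewrite powRr1 // sumr_ge0.
Qed.

Lemma powR_le_affine r u : 0 < r <= 1 -> 0 <= u -> u `^ r <= r * u + (1 - r).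
Proof.
case/andP=> r0 r1 u0; have [->|r_neq1] := eqVneq r 1.
  by rewrite powRr1 // mul1r subrr addr0.
have r_lt1 : r < 1 by rewrite lt_neqAle r_neq1.
(* Young's inequality for u ^ r and 1 with exponents 1/r and 1/(1 - r) *)
have := @conjugate_powR R (u `^ r) 1 r^-1 (1 - r)^-1 (powR_ge0 _ _) ler01.
rewrite !invr_gt0 r0 subr_gt0 r_lt1 !invrK addrCA subrr addr0 => /(_ isT isT erefl).
by rewrite mulr1 -powRrM mulfV ?gt_eqF // powRr1 // powR1 mul1r mulrC.
Qed.

Lemma sum_powR_transport m n (s : 'I_m -> 'I_n -> R) (a : 'I_n -> R) (b : 'I_m -> R) r :
  r != 0 -> (forall k, \sum_i s i k = a k) -> (forall i, \sum_k s i k = b i) ->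
  (forall i k, s i k != 0 -> a k = b i) -> \sum_k a k `^ r = \sum_i b i `^ r.
Proof.
move=> r0 s_col s_row s_supp.
(* [x ^ r = x * (x ^ r / x)] holds at [x = 0] too, since then both sides vanish *)
have powRE x : x `^ r = x * (x `^ r / x).
  by have [->|x0] := eqVneq x 0; rewrite ?mul0r ?powR0 // mulrCA mulfV ?mulr1.
transitivity (\sum_k \sum_i s i k * (b i `^ r / b i)).
  apply: eq_bigr => k _; rewrite powRE -{1}s_col mulr_suml; apply: eq_bigr => i _.
  by have [->|/s_supp->] := eqVneq (s i k) 0; rewrite ?mul0r.
by rewrite exchange_big; apply: eq_bigr => i _; rewrite -mulr_suml s_row -powRE.
Qed.

Variables (q sg : R).
Hypothesis q_gt0 : 0 < q.
(* [t |-> sg * t ^ q] is convex on [0, +oo): [sg = 1] yields the inequalities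
   for q >= 1 and [sg = -1] their reverses for q <= 1. *)
Hypothesis sg_convex : (sg = 1 /\ 1 <= q) \/ (sg = -1 /\ q <= 1).
Let q_ge0 : 0 <= q := ltW q_gt0.
Let q_neq0 : q != 0 := lt0r_neq0 q_gt0.

Lemma sg_mul_le w a b : 0 <= w -> sg * a <= sg * b -> sg * (w * a) <= sg * (w * b).
Proof. by move=> w0 ab; rewrite mulrCA [leRHS]mulrCA ler_wpM2l. Qed.

Lemma sg_sum_le (I : finType) (a b : I -> R) :
  (forall i, sg * a i <= sg * b i) -> sg * \sum_i a i <= sg * \sum_i b i.
Proof. by move=> ab; rewrite !mulr_sumr; apply: ler_sum => i _. Qed.

Lemma sg_powR_le a b r : 0 <= a -> 0 <= b -> 0 <= r ->
  sg * a <= sg * b -> sg * a `^ r <= sg * b `^ r.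
Proof.
move=> a0 b0 r0; case: sg_convex => -[-> _]; rewrite ?mul1r ?mulN1r ?lerN2;
exact: ge0_ler_powR.
Qed.

Lemma powR_tangent_le t : 0 <= t -> sg * (1 + q * (t - 1)) <= sg * t `^ q.
Proof.
move=> t0; case: sg_convex => -[-> q1]; rewrite ?mul1r ?mulN1r; last first.
  by rewrite lerN2; have := powR_le_affine (r := q) _ t0; rewrite q_gt0 q1; lra.
have qV : 0 < q^-1 <= 1 by rewrite invr_gt0 q_gt0 invf_le1.
have := powR_le_affine qV (powR_ge0 t q).
rewrite -powRrM mulfV ?gt_eqF // powRr1 // -(ler_pM2l q_gt0).
by rewrite mulrDr mulrA mulrBr mulr1 mulfV ?gt_eqF // mul1r; lra.
Qed.

Lemma jensen_powR (I : finType) (w x : I -> R) :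
  (forall i, 0 <= w i) -> \sum_i w i = 1 -> (forall i, 0 <= x i) ->
  sg * (\sum_i w i * x i) `^ q <= sg * \sum_i w i * x i `^ q.
Proof.
move=> w0 w1 x0; set m := \sum_i w i * x i.
have wx0 i : 0 <= w i * x i by rewrite mulr_ge0.
have [m0|m_neq0] := eqVneq m 0.
  have /psumr_eq0P wx_eq0 := m0; rewrite m0 powR0 ?gt_eqF // big1 // => i _.
  have /eqP := wx_eq0 (fun i _ => wx0 i) i isT.
  by rewrite mulf_eq0 => /orP[]/eqP->; rewrite ?mul0r // powR0 ?gt_eqF // mulr0.
have m_gt0 : 0 < m by rewrite lt_neqAle eq_sym m_neq0 sumr_ge0.
(* compare x i ^ q with the tangent of x ^ q at x = m *)
have tangent_sum : \sum_i w i * (m `^ q * (1 + q * (x i / m - 1))) = m `^ q.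
  have affine i : w i * (m `^ q * (1 + q * (x i / m - 1))) =
      m `^ q * (1 - q) * w i + m `^ q * q / m * (w i * x i) by ring.
  rewrite (eq_bigr _ (fun i _ => affine i)) big_split /= -!mulr_sumr w1 -/m.
  by rewrite -mulrA mulfVK //; ring.
rewrite -[X in sg * X <= _]tangent_sum; apply: sg_sum_le => i; apply: sg_mul_le => //.
rewrite -[in leRHS](divfK m_neq0 (x i)) powRM ?divr_ge0 ?x0 ?(ltW m_gt0) // [_ * m `^ q]mulrC.
apply: sg_mul_le; first exact: powR_ge0.
by apply: powR_tangent_le; rewrite divr_ge0 ?x0 ?(ltW m_gt0).
Qed.

Lemma qnorm_doubly_stochastic n (s : 'I_n -> 'I_n -> R) (g : 'I_n -> R) :
  (forall k i, 0 <= s k i) -> (forall k, \sum_i s k i = 1) ->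
  (forall i, \sum_k s k i = 1) -> (forall i, 0 <= g i) ->
  sg * qnorm q (fun k => \sum_i s k i * g i) <= sg * qnorm q g.
Proof.
move=> s0 s_row s_col g0.
apply: sg_powR_le; rewrite ?invr_ge0 //; try by apply: sumr_ge0 => *; exact: powR_ge0.
apply: le_trans (sg_sum_le (fun k => jensen_powR (s0 k) (s_row k) g0)) _.
rewrite exchange_big /= (eq_bigr (fun i => g i `^ q)) // => i _.
by rewrite -mulr_suml s_col mul1r.
Qed.

Lemma qnorm_sum (I : finType) n (d : I -> 'I_n -> R) : (forall j k, 0 <= d j k) ->
  sg * qnorm q (fun k => \sum_j d j k) <= sg * \sum_j qnorm q (d j).
Proof.
move=> d0; set a := \sum_j qnorm q (d j).
have a0 : 0 <= a by apply: sumr_ge0 => j _; exact: qnorm_ge0.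
have dj0 j : qnorm q (d j) = 0 -> forall k, d j k = 0 by move/qnorm_eq0; apply.
have [a_eq0|a_neq0] := eqVneq a 0.
  have qd0 j : qnorm q (d j) = 0.
    by move/psumr_eq0P: a_eq0; apply=> // i _; exact: qnorm_ge0.
  rewrite a_eq0 /qnorm big1 ?powR0 ?gt_eqF ?invr_gt0 // => k _.
  by rewrite big1 ?powR0 ?gt_eqF // => j _; rewrite dj0.
(* write sum_j d j = a * sum_j w j * x j as a convex combination of unit vectors x j *)
pose w j := qnorm q (d j) / a; pose x j k := d j k / qnorm q (d j).
have w0 j : 0 <= w j by rewrite divr_ge0 ?qnorm_ge0.
have w1 : \sum_j w j = 1 by rewrite -mulr_suml mulfV.
have x0 j k : 0 <= x j k by rewrite divr_ge0 ?qnorm_ge0.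
have dE k : \sum_j d j k = a * \sum_j w j * x j k.
  rewrite mulr_sumr; apply: eq_bigr => j _; rewrite /w /x.
  have [dj_eq0|dj_neq0] := eqVneq (qnorm q (d j)) 0.
    by rewrite dj_eq0 dj0 // !mul0r mulr0.
  by field; rewrite dj_neq0 a_neq0.
have xK j : qnorm q (d j) != 0 -> \sum_k x j k `^ q = 1.
  move=> dj_neq0; under eq_bigr do rewrite powRM ?invr_ge0 ?qnorm_ge0 //.
  by rewrite -mulr_suml -qnormK ?gt_eqF // -powRM ?invr_ge0 ?qnorm_ge0 // mulfV ?powR1.
rewrite -(@powRr1 _ a) // -(mulfV q_neq0) powRrM.
apply: sg_powR_le; rewrite ?invr_ge0 ?powR_ge0 //.
  by apply: sumr_ge0 => *; exact: powR_ge0.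
have dqE k : (\sum_j d j k) `^ q = a `^ q * (\sum_j w j * x j k) `^ q.
  by rewrite dE powRM // sumr_ge0 // => j _; rewrite mulr_ge0.
rewrite (eq_bigr _ (fun k _ => dqE k)).
rewrite -mulr_sumr -[a `^ q in leRHS]mulr1; apply: sg_mul_le; first exact: powR_ge0.
apply: le_trans (sg_sum_le (fun k => jensen_powR w0 w1 (x0^~ k))) _.
rewrite exchange_big /= -w1 (eq_bigr w) // => j _; rewrite -mulr_sumr.
have [dj_eq0|/xK->] := eqVneq (qnorm q (d j)) 0; last by rewrite mulr1.
by rewrite /w dj_eq0 !mul0r.
Qed.
End PowerSums.

Lemma diag_mx_rank_ge2 (F : fieldType) n (d : 'rV[F]_n) k1 k2 :
  k1 != k2 -> d 0 k1 != 0 -> d 0 k2 != 0 -> (2 <= \rank (diag_mx d))%N.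
Proof.
move=> k12 d1 d2; set D := diag_mx d.
pose E : 'M[F]_(1 + 1, n) := col_mx (delta_mx 0 k1) (delta_mx 0 k2).
pose G : 'M[F]_(n, 1 + 1) := row_mx (delta_mx k1 0) (delta_mx k2 0).
have EDG : E *m D *m G = block_mx (col k1 (row k1 D)) (col k2 (row k1 D))
                                  (col k1 (row k2 D)) (col k2 (row k2 D)).
  by rewrite /E /G !mul_mx_row !mul_col_mx -!rowE -!colE block_mxEh.
have D12 : col k2 (row k1 D) = 0 by apply/matrixP => i j; rewrite !mxE (negPf k12) mulr0n.
have EDG_unit : E *m D *m G \in unitmx.
  by rewrite unitmxE EDG D12 det_lblock !det_mx11 !mxE !eqxx !mulr1n unitfE mulf_neq0.
rewrite -[2%N](mxrank_unit EDG_unit).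
exact: leq_trans (mxrankM_maxl _ _) (mxrankM_maxr _ _).
Qed.

Section GramMatrices.
Variable R : realType.
Local Notation C := R[i].

Lemma Re_sum (I : finType) (F : I -> C) : complex.Re (\sum_i F i) = \sum_i complex.Re (F i).
Proof. exact: raddf_sum. Qed.

Lemma Re_mul_real (z : C) (x : R) : complex.Re (z * real_complex R x) = complex.Re z * x.
Proof. by case: z => a b /=; ring. Qed.

Lemma trmxC_mxrow N m (n : 'I_N -> nat) (X : forall j, 'M[C]_(m, n j)) :
  (\mxrow_j X j) ^t* = \mxcol_j (X j) ^t*.
Proof. by apply/matrixP => i j; rewrite !mxE. Qed.

Definition is_gram n (M : 'M[C]_n) := exists m (Y : 'M[C]_(m, n)), M = Y ^t* *m Y.

Lemma is_gram_mulmx m n (X : 'M[C]_(m, n)) : is_gram (X ^t* *m X).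
Proof. by exists m, X. Qed.

Lemma is_gram_mulmx_tr m n (X : 'M[C]_(m, n)) : is_gram (X *m X ^t*).
Proof. by exists n, (X ^t*); rewrite trmxCK. Qed.

Lemma gram_normalmx n (M : 'M[C]_n) : is_gram M -> M \is normalmx.
Proof. by case=> m [Y ->]; apply/normalmxP; rewrite trmx_mul map_mxM trmxCK. Qed.

Lemma normal_spectral_diag n (M : 'M[C]_n) : M \is normalmx ->
  diag_mx (spectral_diag M) = spectralmx M *m M *m (spectralmx M) ^t*.
Proof.
have U_unitary := spectral_unitarymx M.
move/orthomx_spectralP; set U := spectralmx M; set D := spectral_diag M => ->.
by rewrite invmx_unitary // !mulmxA (unitarymxP U_unitary) mul1mx mulmxtVK.
Qed.

Lemma normal_spectral_diag_entry n (M : 'M[C]_n) k : M \is normalmx ->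
  spectral_diag M 0 k = (spectralmx M *m M *m (spectralmx M) ^t*) k k.
Proof. by move/normal_spectral_diag/matrixP/(_ k k); rewrite mxE eqxx mulr1n. Qed.

Lemma mulmx_trC_diag_ge0 m n (W : 'M[C]_(m, n)) k : 0 <= (W ^t* *m W) k k.
Proof. by rewrite mxE sumr_ge0 // => i _; rewrite !mxE mulrC mul_conjC_ge0. Qed.

Lemma gram_spectral_diag_ge0 n (M : 'M[C]_n) k : is_gram M -> 0 <= spectral_diag M 0 k.
Proof.
move=> gM; rewrite normal_spectral_diag_entry ?gram_normalmx //.
case: gM => m [Y ->]; set U := spectralmx _.
have -> : U *m (Y ^t* *m Y) *m U ^t* = (Y *m U ^t*) ^t* *m (Y *m U ^t*).
  by rewrite trmx_mul map_mxM trmxCK !mulmxA.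
exact: mulmx_trC_diag_ge0.
Qed.

(* For a Gram matrix these are its eigenvalues, which are real and nonnegative. *)
Definition eigval n (M : 'M[C]_n) k := complex.Re (spectral_diag M 0 k).

Lemma eigvalE n (M : 'M[C]_n) k :
  is_gram M -> spectral_diag M 0 k = real_complex R (eigval M k).
Proof. by move=> gM; rewrite /eigval RRe_real // ger0_real // gram_spectral_diag_ge0. Qed.

Lemma eigval_ge0 n (M : 'M[C]_n) k : is_gram M -> 0 <= eigval M k.
Proof. by move=> gM; rewrite -lecR -eigvalE // gram_spectral_diag_ge0. Qed.

Lemma sum_powR_gram_diag m n (W : 'M[C]_(m, n)) (dP : 'rV[C]_n) (dQ : 'rV[C]_m) r :
  r != 0 -> W ^t* *m W = diag_mx dP -> W *m W ^t* = diag_mx dQ ->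
  \sum_k complex.Re (dP 0 k) `^ r = \sum_i complex.Re (dQ 0 i) `^ r.
Proof.
move=> r0 WWP WWQ.
(* the weights |W i k|^2 transport dP onto dQ, and W i k != 0 forces dP k = dQ i *)
have diag_comm : diag_mx dP *m W ^t* = W ^t* *m diag_mx dQ by rewrite -WWP -WWQ mulmxA.
apply: (@sum_powR_transport _ _ _ (fun i k => complex.Re (W i k * (W i k)^*))) => //.
- move=> k; rewrite -Re_sum; have /matrixP/(_ k k) := WWP.
  rewrite !mxE eqxx mulr1n => <-; congr complex.Re.
  by apply: eq_bigr => i _; rewrite !mxE mulrC.
- move=> i; rewrite -Re_sum; have /matrixP/(_ i i) := WWQ.
  rewrite !mxE eqxx mulr1n => <-; congr complex.Re.
  by apply: eq_bigr => k _; rewrite !mxE.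
- move=> i k Wik; have cWik : (W i k)^* != 0.
    by apply: contraNneq Wik => ->; rewrite mulr0 raddf0.
  have /matrixP/(_ k i) := diag_comm.
  by rewrite mul_diag_mx mul_mx_diag !mxE [(W i k)^* * _]mulrC => /(mulIf cWik) ->.
Qed.

Lemma sum_eigval_powR_trC m n (X : 'M[C]_(m, n)) r : r != 0 ->
  \sum_k eigval (X ^t* *m X) k `^ r = \sum_i eigval (X *m X ^t*) i `^ r.
Proof.
move=> r0; set P := X ^t* *m X; set Q := X *m X ^t*.
have [U_unitary V_unitary] := (spectral_unitarymx P, spectral_unitarymx Q).
set U := spectralmx P in U_unitary *; set V := spectralmx Q in V_unitary *.
apply: (@sum_powR_gram_diag _ _ (V *m X *m U ^t*)) => //.
- rewrite (normal_spectral_diag (gram_normalmx (is_gram_mulmx X))) -/P -/U.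
  by rewrite !trmx_mul !map_mxM trmxCK !mulmxA mulmxKtV.
- rewrite (normal_spectral_diag (gram_normalmx (is_gram_mulmx_tr X))) -/Q -/V.
  by rewrite !trmx_mul !map_mxM trmxCK !mulmxA mulmxKtV.
Qed.

Lemma normal_spectral_decomp n (M : 'M[C]_n) : M \is normalmx ->
  M = (spectralmx M) ^t* *m diag_mx (spectral_diag M) *m spectralmx M.
Proof. by move/orthomx_spectralP => {1}->; rewrite invmx_unitary // spectral_unitarymx. Qed.

Lemma unitarymx_sqnorm_row m n (W : 'M[C]_(m, n)) k : W \is unitarymx ->
  \sum_i complex.Re (W k i * (W k i)^*) = 1.
Proof.
move/unitarymxP/matrixP/(_ k k); rewrite !mxE eqxx mulr1n -Re_sum => WW.
by rewrite -[RHS]/(complex.Re 1) -WW; congr complex.Re; apply: eq_bigr => i _; rewrite !mxE.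
Qed.

Lemma unitarymx_sqnorm_col n (W : 'M[C]_n) i : W \is unitarymx ->
  \sum_k complex.Re (W k i * (W k i)^*) = 1.
Proof.
rewrite -trmxC_unitary => /(unitarymx_sqnorm_row i) <-.
by apply: eq_bigr => k _; rewrite !mxE conjCK mulrC.
Qed.

Lemma conj_diag_mx_diag n (W : 'M[C]_n) (d : 'rV[C]_n) k :
  (W *m diag_mx d *m W ^t*) k k = \sum_i W k i * (W k i)^* * d 0 i.
Proof. by rewrite mxE; apply: eq_bigr => i _; rewrite mul_mx_diag !mxE mulrAC. Qed.

Lemma eigval_sum_doubly_stochastic (I : finType) n (M : 'M[C]_n) (F : I -> 'M[C]_n) :
  M \is normalmx -> (forall j, is_gram (F j)) -> M = \sum_j F j ->
  exists s : I -> 'I_n -> 'I_n -> R,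
    [/\ forall j k i, 0 <= s j k i, forall j k, \sum_i s j k i = 1,
        forall j i, \sum_k s j k i = 1 &
        forall k, eigval M k = \sum_j \sum_i s j k i * eigval (F j) i].
Proof.
move=> M_normal F_gram MF; set U := spectralmx M.
pose W j := U *m (spectralmx (F j)) ^t*.
have W_unitary j : W j \is unitarymx.
  by rewrite mul_unitarymx ?trmxC_unitary ?spectral_unitarymx.
exists (fun j k i => complex.Re (W j k i * (W j k i)^*)); split.
- by move=> j k i; rewrite -ler0c (RRe_real (ger0_real _)) ?mul_conjC_ge0.
- by move=> j k; exact: unitarymx_sqnorm_row.
- by move=> j i; exact: unitarymx_sqnorm_col.
move=> k; rewrite /eigval normal_spectral_diag_entry // -/U.
have -> : U *m M *m U ^t* = \sum_j W j *m diag_mx (spectral_diag (F j)) *m (W j) ^t*.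
  rewrite {1}MF mulmx_sumr mulmx_suml; apply: eq_bigr => j _.
  rewrite {1}(normal_spectral_decomp (gram_normalmx (F_gram j))).
  by rewrite /W !trmx_mul map_mxM trmxCK !mulmxA.
rewrite summxE Re_sum; apply: eq_bigr => j _.
rewrite conj_diag_mx_diag Re_sum; apply: eq_bigr => i _.
by rewrite eigvalE // Re_mul_real.
Qed.

Lemma sum_spectral_diag n (M : 'M[C]_n) : M \is normalmx -> \sum_k spectral_diag M 0 k = \tr M.
Proof.
move=> /normal_spectral_diag MD.
by rewrite -mxtrace_diag MD -mulmxA mxtrace_mulC mulmxKtV ?spectral_unitarymx.
Qed.

Lemma eigval_rank_le1 n (M : 'M[C]_n) k l : is_gram M -> (\rank M <= 1)%N ->
  eigval M k != 0 -> eigval M l != 0 -> k = l.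
Proof.
move=> M_gram rkM Mk Ml; apply/eqP; apply: contraTT rkM => kl.
have nz i : eigval M i != 0 -> spectral_diag M 0 i != 0.
  by rewrite eigvalE // => /eqP Mi; apply/eqP => /complexI.
rewrite -ltnNge; apply: leq_trans (diag_mx_rank_ge2 kl (nz _ Mk) (nz _ Ml)) _.
rewrite normal_spectral_diag ?gram_normalmx //.
exact: leq_trans (mxrankM_maxl _ _) (mxrankM_maxr _ _).
Qed.

Lemma qnorm_eigval_rank_le1 (q : R) m n (K : 'M[R]_(m, n)) : q != 0 -> (\rank K <= 1)%N ->
  qnorm q (eigval ((mxRtoC K) ^t* *m mxRtoC K)) = \sum_i \sum_j K i j ^+ 2.
Proof.
move=> q0 rkK; set G := _ *m _; have G_gram : is_gram G := is_gram_mulmx _.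
have rkG : (\rank G <= 1)%N.
  by apply: leq_trans (mxrankM_maxr _ _) _; rewrite mxrank_map.
rewrite qnorm_single_support // => [|k|k l]; last 2 first.
- exact: eigval_ge0.
- exact: eigval_rank_le1.
rewrite /eigval -Re_sum sum_spectral_diag ?gram_normalmx // /mxtrace Re_sum exchange_big.
apply: eq_bigr => i _; rewrite mxE Re_sum; apply: eq_bigr => j _.
by rewrite !mxE conj_Creal ?complex_real // -rmorphM.
Qed.
End GramMatrices.

Section MatrixMinkowski.
Variable R : realType.
Local Notation C := R[i].
Variables (q sg : R).
Hypothesis q_gt0 : 0 < q.
Hypothesis sg_convex : (sg = 1 /\ 1 <= q) \/ (sg = -1 /\ q <= 1).

Lemma qnorm_eigval_sum (I : finType) n (M : 'M[C]_n) (F : I -> 'M[C]_n) :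
  is_gram M -> (forall j, is_gram (F j)) -> M = \sum_j F j ->
  sg * qnorm q (eigval M) <= sg * \sum_j qnorm q (eigval (F j)).
Proof.
move=> M_gram F_gram MF.
have [s [s0 s_row s_col eigvalME]] :=
  eigval_sum_doubly_stochastic (gram_normalmx M_gram) F_gram MF.
pose d j k := \sum_i s j k i * eigval (F j) i.
have d0 j k : 0 <= d j k by apply: sumr_ge0 => i _; rewrite mulr_ge0 ?eigval_ge0.
have -> : eigval M = fun k => \sum_j d j k by apply/funext => k; exact: eigvalME.
apply/(le_trans (qnorm_sum q_gt0 sg_convex d0))/sg_sum_le => j.
apply: (qnorm_doubly_stochastic q_gt0 sg_convex (s0 j) (s_row j) (s_col j)) => i.
exact: eigval_ge0.
Qed.

Lemma qnorm_eigval_trC m n (X : 'M[C]_(m, n)) :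
  qnorm q (eigval (X ^t* *m X)) = qnorm q (eigval (X *m X ^t*)).
Proof. by rewrite /qnorm sum_eigval_powR_trC ?lt0r_neq0. Qed.

Lemma qnorm_eigval_mxrow N m (n : 'I_N -> nat) (X : forall j, 'M[C]_(m, n j)) :
  sg * qnorm q (eigval ((\mxrow_j X j) ^t* *m \mxrow_j X j)) <=
  sg * \sum_j qnorm q (eigval ((X j) ^t* *m X j)).
Proof.
rewrite qnorm_eigval_trC (eq_bigr _ (fun j _ => qnorm_eigval_trC (X j))).
apply: qnorm_eigval_sum => [|j|]; try exact: is_gram_mulmx_tr.
by rewrite trmxC_mxrow mul_mxrow_mxcol.
Qed.

Lemma qnorm_eigval_col_mx m1 m2 n (X : 'M[C]_(m1, n)) (Y : 'M[C]_(m2, n)) :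
  sg * qnorm q (eigval ((col_mx X Y) ^t* *m col_mx X Y)) <=
  sg * (qnorm q (eigval (X ^t* *m X)) + qnorm q (eigval (Y ^t* *m Y))).
Proof.
pose F (b : bool) := if b then X ^t* *m X else Y ^t* *m Y.
have -> : qnorm q (eigval (X ^t* *m X)) + qnorm q (eigval (Y ^t* *m Y)) =
  \sum_b qnorm q (eigval (F b)) by rewrite big_bool.
apply: qnorm_eigval_sum => [|[]|]; try exact: is_gram_mulmx.
by rewrite big_bool tr_col_mx map_row_mx mul_row_col.
Qed.
End MatrixMinkowski.

Section SchattenBlocks.
Variable R : realType.
Local Notation C := R[i].

Lemma block2N_mxrow N m1 m2 (n : 'I_N -> nat)
    (A : forall j, 'M[C]_(m1, n j)) (B : forall j, 'M[C]_(m2, n j)) :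
  block2N A B = \mxrow_j col_mx (A j) (B j).
Proof. by apply/matrixP => i j; rewrite !mxE; case: splitP => k _; rewrite !mxE. Qed.

Lemma sum_sqr_norm_compression N m1 m2 (n : 'I_N -> nat)
    (A : forall j, 'M[C]_(m1, n j)) (B : forall j, 'M[C]_(m2, n j)) p :
  \sum_i \sum_j norm_compression A B p i j ^+ 2 =
  \sum_j (schatten (A j) p ^+ 2 + schatten (B j) p ^+ 2).
Proof. by rewrite exchange_big; apply: eq_bigr => j _; rewrite big_ord_recl big_ord1 !mxE. Qed.

Lemma schatten_trE m n (X : 'M[C]_(m, n)) r :
  schatten_tr X r = \sum_k eigval (X ^t* *m X) k `^ (r / 2).
Proof. by []. Qed.

Variable p : R.
Hypothesis p_gt0 : 0 < p.
Let q := p / 2.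
Let q_gt0 : 0 < q. Proof. by rewrite divr_gt0. Qed.

Lemma schatten_ge0 m n (X : 'M[C]_(m, n)) : 0 <= schatten X p.
Proof. exact: powR_ge0. Qed.

Lemma schatten_sqr m n (X : 'M[C]_(m, n)) :
  schatten X p ^+ 2 = qnorm q (eigval (X ^t* *m X)).
Proof.
rewrite -powR_mulrn ?schatten_ge0 // /schatten schatten_trE -powRrM.
by congr (_ `^ _); rewrite /q invf_div mulrC.
Qed.

Lemma schattenE m n (X : 'M[C]_(m, n)) :
  schatten X p = qnorm q (eigval (X ^t* *m X)) `^ 2^-1.
Proof.
rewrite -schatten_sqr -powR_mulrn ?schatten_ge0 // -powRrM mulfV ?pnatr_eq0 //.
by rewrite powRr1 ?schatten_ge0.
Qed.

Lemma schatten_block2N_compression (sg : R) N m1 m2 (n : 'I_N -> nat)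
    (A : forall j, 'M[C]_(m1, n j)) (B : forall j, 'M[C]_(m2, n j)) :
  (sg = 1 /\ 1 <= q) \/ (sg = -1 /\ q <= 1) -> (\rank (norm_compression A B p) <= 1)%N ->
  sg * schatten (block2N A B) p <= sg * schatten (mxRtoC (norm_compression A B p)) p.
Proof.
move=> sg_convex rkK; rewrite !schattenE.
apply: (sg_powR_le sg_convex); rewrite ?qnorm_ge0 ?invr_ge0 ?ler0n //.
rewrite (qnorm_eigval_rank_le1 (lt0r_neq0 q_gt0) rkK) sum_sqr_norm_compression block2N_mxrow.
apply: le_trans (qnorm_eigval_mxrow q_gt0 sg_convex (fun j => col_mx (A j) (B j))) _.
apply: sg_sum_le => j.
apply: le_trans (qnorm_eigval_col_mx q_gt0 sg_convex (A j) (B j)) _.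
by rewrite -!schatten_sqr.
Qed.
End SchattenBlocks.

Theorem mainTheorem2 (R : realType) (N m1 m2 : nat) (n : 'I_N -> nat)
    (A : forall j : 'I_N, 'M[R[i]]_(m1, n j)) (B : forall j : 'I_N, 'M[R[i]]_(m2, n j))
    (p : R) :
  0 < p ->
  (\rank (norm_compression A B p) <= 1)%N ->
  (2 <= p -> schatten (block2N A B) p <= schatten (mxRtoC (norm_compression A B p)) p) /\
  (p <= 2 -> schatten (mxRtoC (norm_compression A B p)) p <= schatten (block2N A B) p).
Proof.
move=> p_gt0 rkK; split => p2.
- have sg_convex : ((1 : R) = 1 /\ 1 <= p / 2) \/ ((1 : R) = -1 /\ p / 2 <= 1).
    by left; rewrite ler_pdivlMr // mul1r.
  by have := schatten_block2N_compression p_gt0 sg_convex rkK; rewrite !mul1r.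
- have sg_convex : ((-1 : R) = 1 /\ 1 <= p / 2) \/ ((-1 : R) = -1 /\ p / 2 <= 1).
    by right; rewrite ler_pdivrMr // mul1r.
  by have := schatten_block2N_compression p_gt0 sg_convex rkK; rewrite !mulN1r lerN2.
Qed.
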